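(* Let $\Phi=\forall u_1\ldots\forall u_n\exists e_1(D_1)\ldots\exists e_m(D_m).\varphi$ be a DQBF, let $A$ be a set of arbiter variables with arbiter clauses $\varphi_A$, let $\tau\in[A]$, and let $\psi_{\mathit{Def}}=\bigwedge_{e\in E}(e\leftrightarrow\psi_e)$, where each $\psi_e$ is a definition for $e$ by $D(e)\cup A$ in $\varphi\wedge\varphi_A$. If $\neg\varphi\wedge\psi_{\mathit{Def}}\wedge\tau$ is satisfied by an assignment $\sigma$, then $\varphi\wedge\varphi_A\wedge\tau\wedge\sigma|_U$ is unsatisfiable.
   Context: For a set $V$ of variables, $[V]$ is the set of assignments $V\to\{\textsc{true},\textsc{false}\}$; assignments are identified with terms of the literals they make true, $\neg\sigma$ is the clause of the negations of these literals, and $\sigma|_W$ denotes restriction. A DQBF is $\Phi=\forall u_1\ldots\forall u_n\exists e_1(D_1)\ldots\exists e_m(D_m).\varphi$ with pairwise distinct variables, $U=\{u_i\}$, $E=\{e_j\}$, dependency sets $D(e_j)=D_j\subseteq U$, and $\varphi$ a CNF over $U\cup E$. Arbiter variables: for $e\in E$ and $\sigma\in[D(e)]$, $e^\sigma$ is a fresh variable; for a set $A$ of these, $\varphi_A=\bigwedge_{e^\sigma\in A}\big((e^\sigma\vee\neg\sigma\vee\neg e)\wedge(\neg e^\sigma\vee\neg\sigma\vee e)\big)$. A definition for a variable $x$ by a set $X$ of variables in a formula $\varphi$ is a formula $\psi$ with $\mathit{var}(\psi)\subseteq X$ such that every satisfying assignment $\sigma$ of $\varphi$ has $\sigma(x)=\psi[\sigma]$.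 *)

From mathcomp Require Import all_boot.
Set Implicit Arguments. Unset Strict Implicit. Unset Printing Implicit Defensive.

(* Variables of a DQBF with n universals u_0..u_{n-1}, m existentials
   e_0..e_{m-1}, and arbiter variables e_j^s, where s : {set 'I_n} encodes
   the assignment sigma in [D_j] that sets u_i true iff i \in s
   (well-formed when s \subset D_j). *)
Inductive var (n m : nat) : Type :=
| VU of 'I_n
| VE of 'I_m
| VA of 'I_m & {set 'I_n}.

Definition assignment n m := var n m -> bool.

Definition literal n m := (var n m * bool)%type.
Definition clause n m := seq (literal n m).
Definition cnf n m := seq (clause n m).

Definition lit_sat n m (rho : assignment n m) (l : literal n m) : bool :=
  rho l.1 == l.2.
Definition clause_sat n m (rho : assignment n m) (c : clause n m) : bool :=
  has (lit_sat rho) c.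
Definition cnf_sat n m (rho : assignment n m) (f : cnf n m) : bool :=
  all (clause_sat rho) f.

Definition over_UE n m (f : cnf n m) : bool :=
  all (all (fun l : literal n m => if l.1 is VA _ _ then false else true)) f.

(* Clause  \neg sigma  for the assignment sigma in [D] encoded by s. *)
Definition neg_term n m (D : {set 'I_n}) (s : {set 'I_n}) : clause n m :=
  [seq (VU m i, ~~ (i \in s)) | i <- enum D].

Definition arbiter_clauses n m (D : 'I_m -> {set 'I_n})
  (A : {set ('I_m * {set 'I_n})}) : cnf n m :=
  flatten [seq [:: (VA a.1 a.2, true) :: (VE n a.1, false) :: neg_term m (D a.1) a.2;
                  (VA a.1 a.2, false) :: (VE n a.1, true) :: neg_term m (D a.1) a.2]
          | a <- enum A].

Inductive formula (n m : nat) : Type :=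
| FTrue | FFalse
| FVar of var n m
| FNot of formula n m
| FAnd of formula n m & formula n m
| FOr of formula n m & formula n m.

Fixpoint feval n m (rho : assignment n m) (f : formula n m) : bool :=
  match f with
  | FTrue => true
  | FFalse => false
  | FVar x => rho x
  | FNot g => ~~ feval rho g
  | FAnd g h => feval rho g && feval rho h
  | FOr g h => feval rho g || feval rho h
  end.

Fixpoint vars_within n m (X : var n m -> Prop) (f : formula n m) : Prop :=
  match f with
  | FTrue | FFalse => True
  | FVar x => X x
  | FNot g => vars_within X g
  | FAnd g h | FOr g h => vars_within X g /\ vars_within X h
  end.

Definition is_definition n m (psi : formula n m) (x : var n m)
  (X : var n m -> Prop) (phi : cnf n m) : Prop :=
  vars_within X psi /\
  forall rho : assignment n m, cnf_sat rho phi -> rho x = feval rho psi.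

Definition dep_arb n m (D : 'I_m -> {set 'I_n})
  (A : {set ('I_m * {set 'I_n})}) (j : 'I_m) (x : var n m) : Prop :=
  match x with
  | VU i => i \in D j
  | VE _ => False
  | VA k s => (k, s) \in A
  end.

From mathcomp Require Import all_boot.
Set Implicit Arguments. Unset Strict Implicit. Unset Printing Implicit Defensive.

(* Any model rho of phi /\ phi_A /\ tau /\ sigma|_U agrees with sigma on U and,
   through tau, on A.  Since each psi_e only reads D(e) \cup A, both rho and
   sigma evaluate psi_e alike, and as rho is a model of the definitions and
   sigma satisfies psi_Def, they agree on E as well.  Hence they agree on every
   variable of phi, contradicting rho |= phi and sigma |= ~phi. *)

Lemma eq_feval_within n m (X : var n m -> Prop) (f : formula n m)
    (r1 r2 : assignment n m) :
  vars_within X f -> (forall x, X x -> r1 x = r2 x) -> feval r1 f = feval r2 f.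
Proof.
move=> Xf eq_r; elim: f Xf => //=.
- by move=> g IHg Xg; rewrite IHg.
- by move=> g IHg h IHh [Xg Xh]; rewrite IHg ?IHh.
- by move=> g IHg h IHh [Xg Xh]; rewrite IHg ?IHh.
Qed.

Lemma is_definition_eq n m (psi : formula n m) (x : var n m)
    (X : var n m -> Prop) (phi : cnf n m) (rho sigma : assignment n m) :
  is_definition psi x X phi -> cnf_sat rho phi ->
  (forall y, X y -> rho y = sigma y) -> sigma x = feval sigma psi ->
  rho x = sigma x.
Proof.
move=> [Xpsi def_x] rho_phi eq_X sigma_x.
by rewrite (def_x _ rho_phi) sigma_x (eq_feval_within Xpsi eq_X).
Qed.

Section AgreeOnUE.

Variables (n m : nat) (r1 r2 : assignment n m).
Hypothesis eqU : forall i, r1 (VU m i) = r2 (VU m i).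
Hypothesis eqE : forall j, r1 (VE n j) = r2 (VE n j).

Lemma eq_clause_sat_UE (c : clause n m) :
  all (fun l : literal n m => if l.1 is VA _ _ then false else true) c ->
  clause_sat r1 c = clause_sat r2 c.
Proof.
elim: c => //= -[x b] c IHc /andP[l_UE c_UE]; rewrite IHc //.
by case: x l_UE => [i|j|j s] //= _; rewrite /lit_sat /= ?eqU ?eqE.
Qed.

Lemma eq_cnf_sat_over_UE (f : cnf n m) :
  over_UE f -> cnf_sat r1 f = cnf_sat r2 f.
Proof.
elim: f => //= c f IHf /andP[c_UE f_UE].
by rewrite IHf // (eq_clause_sat_UE c_UE).
Qed.

End AgreeOnUE.

Theorem lemma7 (n m : nat) (D : 'I_m -> {set 'I_n}) (phi : cnf n m)
  (A : {set ('I_m * {set 'I_n})})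
  (tau : ('I_m * {set 'I_n}) -> bool)
  (psi : 'I_m -> formula n m) :
  over_UE phi ->
  (forall a, a \in A -> a.2 \subset D a.1) ->
  (forall j : 'I_m,
     is_definition (psi j) (VE n j) (dep_arb D A j)
       (phi ++ arbiter_clauses D A)) ->
  forall sigma : assignment n m,
    ~~ cnf_sat sigma phi ->
    (forall j : 'I_m, sigma (VE n j) = feval sigma (psi j)) ->
    (forall a, a \in A -> sigma (VA a.1 a.2) = tau a) ->
  ~ exists rho : assignment n m,
      [/\ cnf_sat rho (phi ++ arbiter_clauses D A),
          (forall a, a \in A -> rho (VA a.1 a.2) = tau a)
        & (forall i : 'I_n, rho (VU m i) = sigma (VU m i))].
Proof.
move=> phi_UE _ psi_def sigma sigma_nphi sigma_def sigma_tau [rho [rho_sat rho_tau rho_U]].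
have eq_dep j y : dep_arb D A j y -> rho y = sigma y.
  case: y => [i _|//|k s y_A]; first exact: rho_U.
  by rewrite (rho_tau (k, s) y_A) (sigma_tau (k, s) y_A).
have rho_E j : rho (VE n j) = sigma (VE n j).
  exact: is_definition_eq (psi_def j) rho_sat (eq_dep j) (sigma_def j).
have rho_phi : cnf_sat rho phi by move: rho_sat; rewrite /cnf_sat all_cat => /andP[].
by move: sigma_nphi; rewrite -(eq_cnf_sat_over_UE rho_U rho_E phi_UE) rho_phi.
Qed.
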